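(* Let $R$ be a Noetherian ring and $E$ an $R$-module of rank $e$, of projective dimension one, minimally generated by $n$ elements, with minimal resolution $0\to R^{n-e}\xrightarrow{\varphi}R^n\to E\to0$. For $0\leq i\leq n-e$ let $\varphi_i$ be the submatrix of $\varphi$ obtained by deleting its last $i$ columns and $E_i=\mathrm{coker}\,\varphi_i$. Then: (a) for $1\leq i\leq n-e-1$, $E_i$ is an $R$-module of projective dimension one with $\mathrm{rank}\,E_i=e+i$; (b) if $E_i$ satisfies $G_s$, then $E_j$ satisfies $G_s$ for all $j\geq i$.
   Context: A module $M$ has rank $r$ if $M\otimes_R\mathrm{Quot}(R)\cong\mathrm{Quot}(R)^r$, with $\mathrm{Quot}(R)$ the total ring of quotients. A module $M$ of rank $r$ satisfies $G_s$ if $\mu(M_{\mathfrak p})\leq\dim R_{\mathfrak p}+r-1$ for every prime $\mathfrak p$ with $1\leq\dim R_{\mathfrak p}\leq s-1$ ($\mu$ = minimal number of generators). *)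

From HB Require Import structures.
From mathcomp Require Import all_boot all_order all_algebra.
Set Implicit Arguments. Unset Strict Implicit. Unset Printing Implicit Defensive.
Import GRing.Theory.
Local Open Scope ring_scope.

(* Modules are given by presentations: a matrix
   A : 'M[R]_(n, m) acting on column vectors defines coker A = R^n / A R^m. *)

Section Defs.
Variable R : comNzRingType.

Definition is_ideal (I : R -> Prop) : Prop :=
  I 0 /\ (forall a b, I a -> I b -> I (a + b)) /\ (forall a b, I b -> I (a * b)).

Definition is_prime (P : R -> Prop) : Prop :=
  is_ideal P /\ ~ P 1 /\ (forall a b, P (a * b) -> P a \/ P b).

Definition is_maximal (M : R -> Prop) : Prop :=
  is_ideal M /\ ~ M 1 /\
  (forall J : R -> Prop, is_ideal J -> (forall x, M x -> J x) ->
     J 1 \/ (forall x, J x -> M x)).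

Definition noetherian : Prop :=
  forall I : R -> Prop, is_ideal I ->
    exists k (g : 'I_k -> R), forall x, I x <-> exists c : 'I_k -> R, x = \sum_(i < k) c i * g i.

Definition nonzerodivisor (a : R) : Prop := forall b, a * b = 0 -> b = 0.

Definition prime_chain_to (p : R -> Prop) (k : nat) : Prop :=
  exists q : nat -> (R -> Prop),
    (forall i, (i <= k)%N -> is_prime (q i)) /\
    (forall i, (i < k)%N -> (forall x, q i x -> q i.+1 x) /\ exists x, q i.+1 x /\ ~ q i x) /\
    (forall x, q k x <-> p x).

Definition height_eq (p : R -> Prop) (d : nat) : Prop :=
  prime_chain_to p d /\ ~ prime_chain_to p d.+1.

Definition in_span_mod n m (A : 'M[R]_(n, m)) k (x : 'I_k -> 'cV[R]_n) (y : 'cV[R]_n) : Prop :=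
  exists (c : 'I_k -> R) (d : 'cV[R]_m), y = \sum_(i < k) c i *: x i + A *m d.

(* coker A has rank r: coker A (x) Quot(R) = Quot(R)^r, i.e. there are
   x_1..x_r in coker A whose images form a Quot(R)-basis of coker A (x) Quot(R). *)
Definition has_rank n m (A : 'M[R]_(n, m)) (r : nat) : Prop :=
  exists x : 'I_r -> 'cV[R]_n,
    (forall y : 'cV[R]_n, exists s, nonzerodivisor s /\ in_span_mod A x (s *: y)) /\
    (forall c : 'I_r -> R,
        (exists t, nonzerodivisor t /\ exists d : 'cV[R]_m,
            t *: (\sum_(i < r) c i *: x i) = A *m d) ->
        forall i, c i = 0).

(* (coker A)_p is generated by k elements *)
Definition mu_loc_le (p : R -> Prop) n m (A : 'M[R]_(n, m)) (k : nat) : Prop :=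
  exists x : 'I_k -> 'cV[R]_n,
    forall y : 'cV[R]_n, exists s, ~ p s /\ in_span_mod A x (s *: y).

Definition mu_le n m (A : 'M[R]_(n, m)) (k : nat) : Prop :=
  exists x : 'I_k -> 'cV[R]_n, forall y : 'cV[R]_n, in_span_mod A x y.

Definition mu_eq n m (A : 'M[R]_(n, m)) (k : nat) : Prop :=
  mu_le A k /\ forall k', (k' < k)%N -> ~ mu_le A k'.

(* 0 -> R^m --A--> R^n -> coker A -> 0 is exact and coker A is not projective,
   i.e. the sequence does not split: projective dimension exactly one. *)
Definition pd_one n m (A : 'M[R]_(n, m)) : Prop :=
  (forall c : 'cV[R]_m, A *m c = 0 -> c = 0) /\
  ~ (exists B : 'M[R]_(m, n), B *m A = 1%:M).

(* minimal resolution: all entries of A lie in every maximal ideal *)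
Definition minimal_pres n m (A : 'M[R]_(n, m)) : Prop :=
  forall M : R -> Prop, is_maximal M -> forall i j, M (A i j).

Definition Gs_cond (s r : nat) n m (A : 'M[R]_(n, m)) : Prop :=
  forall p, is_prime p -> forall d, height_eq p d ->
    (1 <= d)%N -> (d <= s - 1)%N -> mu_loc_le p A (d + r).-1.

Definition satisfies_G (s : nat) n m (A : 'M[R]_(n, m)) : Prop :=
  exists r, has_rank A r /\ Gs_cond s r A.

Definition dropcols n m (i : nat) (A : 'M[R]_(n, m)) : 'M[R]_(n, m - i) :=
  colsub (fun j : 'I_(m - i) => widen_ord (leq_subr i m) j) A.

End Defs.

From HB Require Import structures.
From mathcomp Require Import all_boot all_order all_algebra.
From mathcomp Require Import zify.
From Stdlib Require Import Classical ClassicalEpsilon FunctionalExtensionality PropExtensionality.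
Set Implicit Arguments. Unset Strict Implicit. Unset Printing Implicit Defensive.
Import GRing.Theory.
Local Open Scope ring_scope.

(* Deleting a column c of a presentation matrix removes one relation: coker
   phi_(i+1) maps onto coker phi_i with kernel generated by the class of c, and
   that class spans a free module because phi is injective.  So each deletion
   raises the rank by exactly one and the local number of generators by at most
   one, which gives the rank formula and carries G_s from E_i to E_j.  The
   modules E_i stay of projective dimension one: phi_i is injective, and it has
   no left inverse since its entries lie in a maximal ideal, which exists
   because R is Noetherian. *)

Section Ideals.
Variable R : comNzRingType.
Implicit Types I J : R -> Prop.

Definition proper_ideal I := is_ideal I /\ ~ I 1.

Lemma ideal_sum I k (F : 'I_k -> R) :
  is_ideal I -> (forall j, I (F j)) -> I (\sum_(j < k) F j).
Proof. by case=> I0 [ID _] IF; apply: big_ind. Qed.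

Lemma chain_le (C : nat -> R -> Prop) :
  (forall k x, C k x -> C k.+1 x) -> forall a b x, (a <= b)%N -> C a x -> C b x.
Proof.
move=> Cup a b x /subnK <-; elim: (b - a)%N => [|k IHk] // Cax.
by rewrite addSn; apply/Cup/IHk.
Qed.

Lemma noetherian_acc (C : nat -> R -> Prop) : noetherian R ->
  (forall k, is_ideal (C k)) -> (forall k x, C k x -> C k.+1 x) ->
  exists N, forall k x, C k x -> C N x.
Proof.
move=> R_noeth C_ideal Cup.
pose U x := exists k, C k x.
have U_ideal : is_ideal U.
  split; first by exists 0%N; have [] := C_ideal 0%N.
  split=> [a b [ka Ca] [kb Cb]|a b [k Cb]].
    exists (maxn ka kb); have [_ [CD _]] := C_ideal (maxn ka kb).
    by apply: CD; [apply: chain_le Cup _ _ _ (leq_maxl ka kb) Ca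
                  | apply: chain_le Cup _ _ _ (leq_maxr ka kb) Cb].
  by exists k; have [_ [_ CM]] := C_ideal k; apply: CM.
have [K [g g_gen]] := R_noeth U U_ideal.
have /choice [kg Ckg] : forall j, exists k, C k (g j).
  move=> j; apply/g_gen; exists (fun l => (l == j)%:R).
  by rewrite (bigD1 j) //= eqxx mul1r big1 ?addr0 // => l /negbTE ->; rewrite mul0r.
exists (\max_(j < K) kg j)%N => k x Ckx.
have [c ->] := (g_gen x).1 (ex_intro _ k Ckx).
apply: ideal_sum => // j; have [_ [_ CM]] := C_ideal (\max_(j < K) kg j)%N.
by apply/CM/(chain_le Cup (leq_bigmax j)).
Qed.

Lemma noetherian_exists_maximal : noetherian R -> exists M : R -> Prop, is_maximal M.
Proof.
move=> R_noeth; apply: NNPP => no_max.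
have /choice [next Hnext] : forall I, exists J, proper_ideal I ->
    proper_ideal J /\ (forall x, I x -> J x) /\ exists x, J x /\ ~ I x.
  move=> I; have [[I_ideal I1]|] := classic (proper_ideal I); last by exists I.
  apply: NNPP => no_J; apply: no_max; exists I; do 2!split=> //.
  move=> J J_ideal IJ; have [|J1] := classic (J 1); [by left | right].
  move=> x Jx; apply: NNPP => Ix; apply: no_J; exists J => _.
  by do 2!split=> //; exists x.
pose C k := iter k next (fun x => x = 0).
have C_proper k : proper_ideal (C k).
  elim: k => [|k [C_ideal Ck1]]; last by have [] := Hnext _ (conj C_ideal Ck1).
  split=> [|/eqP]; last by rewrite oner_eq0.
  by split=> //; split=> [a b -> ->|a b ->]; rewrite ?addr0 ?mulr0.
have Cup k x : C k x -> C k.+1 x by have [_ [CS _]] := Hnext _ (C_proper k); apply: CS.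
have [N CN] := noetherian_acc R_noeth (fun k => (C_proper k).1) Cup.
have [_ [_ [x [CSx CNx]]]] := Hnext _ (C_proper N).
exact: CNx (CN N.+1 x CSx).
Qed.

Lemma ideal_entries_no_left_inverse I k l (A : 'M[R]_(k, l)) :
  proper_ideal I -> (forall i j, I (A i j)) -> (0 < l)%N ->
  ~ exists B : 'M[R]_(l, k), B *m A = 1%:M.
Proof.
move=> [I_ideal I1] IA l_gt0 [B BA1]; apply: I1.
have /matrixP /(_ (Ordinal l_gt0) (Ordinal l_gt0)) := BA1.
rewrite !mxE eqxx mulr1n => <-; apply: ideal_sum => // j.
by have [_ [_ IM]] := I_ideal; apply: IM.
Qed.
End Ideals.

Section OrdRcons.
Variables (T : Type) (r : nat).

Definition ord_rcons (f : 'I_r -> T) (t : T) (o : 'I_r.+1) : T :=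
  if unlift ord_max o is Some a then f a else t.

Lemma ord_rcons_widen f t a : ord_rcons f t (widen_ord (leqnSn r) a) = f a.
Proof.
have -> : widen_ord (leqnSn r) a = lift ord_max a by apply/val_inj; exact: esym (lift_max a).
by rewrite /ord_rcons liftK.
Qed.

Lemma ord_rcons_max f t : ord_rcons f t ord_max = t.
Proof. by rewrite /ord_rcons unlift_none. Qed.

Lemma ord_rcons_eta (f : 'I_r.+1 -> T) :
  ord_rcons (f \o widen_ord (leqnSn r)) (f ord_max) = f.
Proof.
apply: functional_extensionality => o; rewrite /ord_rcons.
case: unliftP => [a ->|-> //] /=; congr f; apply/val_inj; exact: esym (lift_max a).
Qed.
End OrdRcons.

Section QuotientInvariants.
Variables (R : comNzRingType) (n : nat).
Implicit Types (P : 'cV[R]_n -> Prop) (w y : 'cV[R]_n).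

Definition colspan k (A : 'M[R]_(n, k)) y := exists d, y = A *m d.

Definition span_mod P k (x : 'I_k -> 'cV[R]_n) y :=
  exists (c : 'I_k -> R) v, P v /\ y = \sum_(i < k) c i *: x i + v.

Definition quot_rank P r := exists x : 'I_r -> 'cV[R]_n,
  (forall y, exists2 s, nonzerodivisor s & span_mod P x (s *: y)) /\
  (forall c : 'I_r -> R,
     (exists2 t, nonzerodivisor t & P (t *: \sum_(i < r) c i *: x i)) ->
     forall i, c i = 0).

Definition quot_mu_loc (p : R -> Prop) P k := exists x : 'I_k -> 'cV[R]_n,
  forall y, exists2 s, ~ p s & span_mod P x (s *: y).

Definition adjoin P w y := exists c v, P v /\ y = v + c *: w.

Lemma in_span_modE k (A : 'M[R]_(n, k)) r (x : 'I_r -> 'cV[R]_n) y :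
  in_span_mod A x y <-> span_mod (colspan A) x y.
Proof.
split=> [[c [d ->]]|[c [_ [[d ->] ->]]]]; last by exists c, d.
by exists c, (A *m d); split=> //; exists d.
Qed.

Lemma has_rank_quot k (A : 'M[R]_(n, k)) r : has_rank A r <-> quot_rank (colspan A) r.
Proof.
split=> -[x [x_span x_indep]]; exists x.
  split=> [y|c [t t_nzd t_rel]]; last by apply: x_indep; exists t.
  by have [s [s_nzd /in_span_modE]] := x_span y; exists s.
split=> [y|c [t [t_nzd t_rel]]]; last by apply: x_indep; exists t.
by have [s s_nzd /in_span_modE] := x_span y; exists s.
Qed.

Lemma mu_loc_le_quot p k (A : 'M[R]_(n, k)) l :
  mu_loc_le p A l <-> quot_mu_loc p (colspan A) l.
Proof.
split=> -[x x_gen]; exists x => y.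
  by have [s [s_p /in_span_modE]] := x_gen y; exists s.
by have [s s_p /in_span_modE] := x_gen y; exists s.
Qed.

Lemma sum_ord_rcons r (c : 'I_r -> R) c' (x : 'I_r -> 'cV[R]_n) w :
  \sum_(i < r.+1) ord_rcons c c' i *: ord_rcons x w i = \sum_(i < r) c i *: x i + c' *: w.
Proof.
rewrite big_ord_recr /= !ord_rcons_max; congr (_ + _).
by apply: eq_bigr => i _; rewrite !ord_rcons_widen.
Qed.

Lemma span_mod_adjoin P w r (x : 'I_r -> 'cV[R]_n) y :
  span_mod (adjoin P w) x y -> span_mod P (ord_rcons x w) y.
Proof.
case=> c [_ [[c' [v [Pv ->]]] ->]]; exists (ord_rcons c c'), v; split=> //.
by rewrite sum_ord_rcons addrA addrAC.
Qed.

Lemma quot_mu_loc_adjoin p P w k :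
  quot_mu_loc p (adjoin P w) k -> quot_mu_loc p P k.+1.
Proof.
case=> x x_gen; exists (ord_rcons x w) => y.
by have [s s_p /span_mod_adjoin] := x_gen y; exists s.
Qed.

Lemma quot_rank_adjoin P w r : (forall c, P (c *: w) -> c = 0) ->
  quot_rank (adjoin P w) r -> quot_rank P r.+1.
Proof.
move=> w_free [x [x_span x_indep]]; exists (ord_rcons x w); split.
  by move=> y; have [s s_nzd /span_mod_adjoin] := x_span y; exists s.
move=> c; rewrite -(ord_rcons_eta c) sum_ord_rcons.
set c0 := _ \o _; set cw := c ord_max => -[t t_nzd t_rel].
have c0_eq0 : forall i, c0 i = 0.
  apply: x_indep; exists t => //.
  exists (- (t * cw)), (t *: (\sum_(i < r) c0 i *: x i + cw *: w)).
  by split=> //; rewrite scalerDr scalerA scaleNr addrK.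
have cw_eq0 : cw = 0.
  apply: t_nzd; apply: w_free; rewrite -scalerA.
  by move: t_rel; rewrite big1 ?add0r // => i _; rewrite c0_eq0 scale0r.
by move=> o; rewrite /ord_rcons; case: unlift => [a|]; rewrite ?c0_eq0.
Qed.
End QuotientInvariants.

Section FirstColumns.
Variables (R : comNzRingType) (n m : nat) (A : 'M[R]_(n, m)).

Definition delta_col (k : nat) : 'cV[R]_m := \col_(o < m) ((o : nat) == k)%:R.

Definition span_first_cols (k : nat) (y : 'cV[R]_n) :=
  exists d : 'cV[R]_m, (forall o : 'I_m, (k <= o)%N -> d o 0 = 0) /\ y = A *m d.

Lemma span_first_cols_all : span_first_cols m = colspan A.
Proof.
apply: functional_extensionality => y; apply: propositional_extensionality.
split=> [[d [_ ->]]|[d ->]]; first by exists d.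
by exists d; split=> // o; rewrite leqNgt ltn_ord.
Qed.

Lemma span_first_colsS k : (k < m)%N ->
  span_first_cols k.+1 = adjoin (span_first_cols k) (A *m delta_col k).
Proof.
move=> k_lt_m; apply: functional_extensionality => y; apply: propositional_extensionality.
split=> [[d [d_supp ->]]|[c [_ [[d [d_supp ->]] ->]]]].
  pose dk := d (Ordinal k_lt_m) 0.
  exists dk, (A *m (d - dk *: delta_col k)); split; last first.
    by rewrite mulmxBr -scalemxAr subrK.
  exists (d - dk *: delta_col k); split=> // o; rewrite leq_eqVlt => /orP[/eqP ko|ko].
    by rewrite !mxE -ko eqxx mulr1 (_ : o = Ordinal k_lt_m) ?subrr //; apply/val_inj.
  by rewrite !mxE d_supp // (gtn_eqF ko) mulr0 subr0.
exists (d + c *: delta_col k); split; last by rewrite mulmxDr scalemxAr.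
by move=> o ko; rewrite !mxE d_supp ?(ltnW ko) // (gtn_eqF ko) mulr0 addr0.
Qed.

Hypothesis A_inj : forall c : 'cV[R]_m, A *m c = 0 -> c = 0.

Lemma delta_col_free k : (k < m)%N ->
  forall c, span_first_cols k (c *: (A *m delta_col k)) -> c = 0.
Proof.
move=> k_lt_m c [d [d_supp dE]].
have : A *m (c *: delta_col k - d) = 0 by rewrite mulmxBr -scalemxAr dE subrr.
move/A_inj/matrixP/(_ (Ordinal k_lt_m) 0); rewrite !mxE eqxx mulr1 d_supp //.
by rewrite subr0.
Qed.

Lemma quot_rank_span_first_cols k q r : (k + q <= m)%N ->
  quot_rank (span_first_cols (k + q)) r -> quot_rank (span_first_cols k) (r + q).
Proof.
elim: q k r => [|q IHq] k r; first by rewrite !addn0.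
rewrite !addnS -addSn => kq_le rank_kq.
have k_lt_m : (k < m)%N by apply: leq_trans kq_le; rewrite ltnS leq_addr.
apply: quot_rank_adjoin (delta_col_free k_lt_m) _.
by rewrite -span_first_colsS //; apply: IHq.
Qed.

Lemma quot_mu_loc_span_first_cols p k q l : (k + q <= m)%N ->
  quot_mu_loc p (span_first_cols (k + q)) l -> quot_mu_loc p (span_first_cols k) (l + q).
Proof.
elim: q k l => [|q IHq] k l; first by rewrite !addn0.
rewrite !addnS -addSn => kq_le mu_kq.
have k_lt_m : (k < m)%N by apply: leq_trans kq_le; rewrite ltnS leq_addr.
apply: (quot_mu_loc_adjoin (w := A *m delta_col k)).
by rewrite -span_first_colsS //; apply: IHq.
Qed.
End FirstColumns.

Section DropCols.
Variables (R : comNzRingType) (n m : nat) (A : 'M[R]_(n, m)).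

Local Notation widen i := (widen_ord (leq_subr i m)).

Definition pad_col i (d : 'cV[R]_(m - i)) : 'cV[R]_m := colsub (widen i) 1%:M *m d.

Lemma dropcolsE i d : dropcols i A *m d = A *m pad_col d.
Proof. by rewrite /dropcols /pad_col mulmxA mulmx_colsub mulmx1. Qed.

Lemma pad_col_widen i (d : 'cV[R]_(m - i)) o : pad_col d (widen i o) 0 = d o 0.
Proof.
rewrite mxE (bigD1 o) //= big1 ?mxE ?eqxx ?mul1r ?addr0 // => o' o'o.
by rewrite !mxE -[widen i o == _]/(o == o') eq_sym (negbTE o'o) mul0r.
Qed.

Lemma pad_col_out i (d : 'cV[R]_(m - i)) (o : 'I_m) : (m - i <= o)%N -> pad_col d o 0 = 0.
Proof.
move=> o_out; rewrite mxE big1 // => o' _; rewrite !mxE.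
case: eqP => [oE|_]; last by rewrite mul0r.
by move: o_out; rewrite oE /= leqNgt ltn_ord.
Qed.

Lemma colspan_dropcols i : colspan (dropcols i A) = span_first_cols A (m - i).
Proof.
apply: functional_extensionality => y; apply: propositional_extensionality.
split=> [[d ->]|[d [d_supp ->]]].
  by rewrite dropcolsE; exists (pad_col d); split=> // o; apply: pad_col_out.
exists (\col_o d (widen i o) 0); rewrite dropcolsE; congr (_ *m _).
apply/matrixP => o z; rewrite (ord1 z).
have [o_in|o_out] := ltnP o (m - i); last by rewrite pad_col_out // d_supp.
by rewrite (_ : o = widen i (Ordinal o_in)) ?pad_col_widen ?mxE //; apply: val_inj.
Qed.

Lemma minimal_pres_dropcols i : minimal_pres A -> minimal_pres (dropcols i A).
Proof. by move=> A_min M M_max a b; rewrite mxE; apply: A_min. Qed.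

Lemma mu_loc_le_dropcols p i j l : (i <= j)%N -> (j <= m)%N ->
  mu_loc_le p (dropcols i A) l -> mu_loc_le p (dropcols j A) (l + (j - i)).
Proof.
move=> ij jm; rewrite !mu_loc_le_quot !colspan_dropcols.
have -> : (m - i = m - j + (j - i))%N by lia.
by apply: quot_mu_loc_span_first_cols; lia.
Qed.

Hypothesis A_inj : forall c : 'cV[R]_m, A *m c = 0 -> c = 0.

Lemma dropcols_inj i (c : 'cV[R]_(m - i)) : dropcols i A *m c = 0 -> c = 0.
Proof.
rewrite dropcolsE => /A_inj /matrixP pad_c0; apply/matrixP => o z.
by rewrite (ord1 z) -pad_col_widen pad_c0 !mxE.
Qed.

Lemma has_rank_dropcols i j r : (i <= j)%N -> (j <= m)%N ->
  has_rank (dropcols i A) r -> has_rank (dropcols j A) (r + (j - i)).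
Proof.
move=> ij jm; rewrite !has_rank_quot !colspan_dropcols.
have -> : (m - i = m - j + (j - i))%N by lia.
by apply: (quot_rank_span_first_cols A_inj); lia.
Qed.

Lemma has_rank_dropcols_full j r : (j <= m)%N ->
  has_rank A r -> has_rank (dropcols j A) (r + j).
Proof.
move=> jm; rewrite !has_rank_quot colspan_dropcols -span_first_cols_all.
by have := @quot_rank_span_first_cols _ _ _ _ A_inj (m - j) j r; rewrite subnK //; apply.
Qed.

Lemma satisfies_G_dropcols s i j : (i <= j)%N -> (j <= m)%N ->
  satisfies_G s (dropcols i A) -> satisfies_G s (dropcols j A).
Proof.
move=> ij jm [r [rank_i G_i]]; exists (r + (j - i))%N.
split=> [|p p_prime d d_ht d_ge1 d_le]; first exact: has_rank_dropcols.
have -> : ((d + (r + (j - i))).-1 = (d + r).-1 + (j - i))%N by lia.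
exact: mu_loc_le_dropcols (G_i p p_prime d d_ht d_ge1 d_le).
Qed.

Lemma pd_one_dropcols i : noetherian R -> minimal_pres A -> (i < m)%N ->
  pd_one (dropcols i A).
Proof.
move=> R_noeth A_min i_lt_m; split; first exact: dropcols_inj.
have [M M_max] := noetherian_exists_maximal R_noeth.
have [M_ideal [M1 _]] := M_max.
apply: (@ideal_entries_no_left_inverse _ M) => //; last by rewrite subn_gt0.
by move=> a b; apply: minimal_pres_dropcols.
Qed.
End DropCols.

Theorem lemma2p6 (R : comNzRingType) (n e : nat) (phi : 'M[R]_(n, n - e)) :
  noetherian R -> (e <= n)%N ->
  pd_one phi -> has_rank phi e -> mu_eq phi n -> minimal_pres phi ->
  (forall i, (1 <= i)%N -> (i <= n - e - 1)%N ->
      pd_one (dropcols i phi) /\ has_rank (dropcols i phi) (e + i)) /\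
  (forall s i j, (i <= j)%N -> (j <= n - e)%N ->
      satisfies_G s (dropcols i phi) -> satisfies_G s (dropcols j phi)).
Proof.
move=> R_noeth _ [phi_inj _] phi_rank _ phi_min; split.
  move=> i i_ge1 i_le; split; first by apply: pd_one_dropcols => //; lia.
  by apply: has_rank_dropcols_full => //; lia.
by move=> s i j ij j_le; apply: satisfies_G_dropcols.
Qed.
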